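(* Let $\sigma,\tau,\theta,\eta\in\mathbb{R}$ and $q\in(-1,1]$. Define $\lambda_0=0$ and $\lambda_{n+1}=\frac{1+q\lambda_n}{1-\sigma\tau\lambda_n}$, assumed well defined with $\lambda_n\neq0$ for all $n\ge1$. Let $(\alpha_n)_{n\ge0},(\beta_n)_{n\ge0},(\gamma_n)_{n\ge0},(\delta_n)_{n\ge0},(\varepsilon_n)_{n\ge1},(\varphi_n)_{n\ge1}$ be real sequences satisfying the system (E1)–(E5) of the context with $\alpha_0=\gamma_0=\delta_0=\varphi_1=0$, $\beta_0=\varepsilon_1=1$, and such that $(\alpha_n,\beta_n)\neq(0,0)$ for all $n\ge0$ and $(\varepsilon_n,\varphi_n)\neq(0,0)$ for all $n\ge1$. Put $\chi_n=\beta_{n-1}\varepsilon_n$ ($n\ge1$). Fix $t>0$ with $a_n(t):=\alpha_nt+\beta_n\ne0$ for all $n\ge0$, set $b_n(t)=\gamma_nt+\delta_n$, $c_n(t)=\varepsilon_nt+\varphi_n$, and let the polynomials $p_n(x;t)$ be defined by $p_{-1}=0$, $p_0=1$ and $xp_n(x;t)=a_n(t)p_{n+1}(x;t)+b_n(t)p_n(x;t)+c_n(t)p_{n-1}(x;t)$ for $n\ge0$ (the last term being absent for $n=0$). Define $$M_n(y)=\frac{\prod_{j=0}^{n-1}a_j(t)}{t^{n/2}}\,p_n(y\sqrt t;t),\qquad n\ge0,$$ and $M_{-1}=0$. Then $M_0=1$ and for all $n\ge0$ $$yM_n(y)=M_{n+1}(y)+\Big(\gamma_n\sqrt t+\frac{\delta_n}{\sqrt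 t}\Big)M_n(y)+\chi_n\Big(1+\sigma\lambda_{n-1}t+\frac{\tau\lambda_{n-1}}{t}+\sigma\tau\lambda_{n-1}^2\Big)M_{n-1}(y),$$ where for $n=0$ the last term is absent.
   Context: The system (E1)–(E5) is: (E1) for $n\ge0$: $\tau\alpha_n\alpha_{n+1}+q\alpha_n\beta_{n+1}+\sigma\beta_n\beta_{n+1}=\alpha_{n+1}\beta_n$; (E2) for $n\ge2$: $\tau\varepsilon_{n-1}\varepsilon_n+q\varepsilon_n\varphi_{n-1}+\sigma\varphi_n\varphi_{n-1}=\varepsilon_{n-1}\varphi_n$; (E3) for $n\ge0$: $\theta\alpha_n+\eta\beta_n+\tau\alpha_n(\gamma_n+\gamma_{n+1})+\sigma\beta_n(\delta_n+\delta_{n+1})+q(\alpha_n\delta_{n+1}+\beta_n\gamma_n)=\beta_n\gamma_{n+1}+\alpha_n\delta_n$; (E4) for $n\ge1$: $\theta\varepsilon_n+\eta\varphi_n+\tau\varepsilon_n(\gamma_n+\gamma_{n-1})+\sigma\varphi_n(\delta_{n-1}+\delta_n)+q(\varphi_n\gamma_n+\delta_{n-1}\varepsilon_n)=\varepsilon_n\delta_n+\varphi_n\gamma_{n-1}$; (E5) for $n\ge1$: $1+\theta\gamma_n+\eta\delta_n+\tau\gamma_n^2+\sigma\delta_n^2+\tau(\alpha_{n-1}\varepsilon_n+\alpha_n\varepsilon_{n+1})+\sigma(\varphi_n\beta_{n-1}+\beta_n\varphi_{n+1})+q(\gamma_n\delta_n+\beta_{n-1}\varepsilon_n+\alpha_n\varphi_{n+1})=\gamma_n\delta_n+\beta_n\varepsilon_{n+1}+\varphi_n\alpha_{n-1}$.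 *)

From HB Require Import structures.
From mathcomp Require Import all_boot all_order all_algebra.
From mathcomp Require Import reals.
Set Implicit Arguments. Unset Strict Implicit. Unset Printing Implicit Defensive.
Import Order.TTheory GRing.Theory Num.Theory.
Local Open Scope ring_scope.

Fixpoint lam (R : realType) (sigma tau q : R) (n : nat) : R :=
  match n with
  | 0%N => 0
  | n'.+1 => (1 + q * lam sigma tau q n') / (1 - sigma * tau * lam sigma tau q n')
  end.

(* Pair (p_{n-1}(x), p_n(x)) for the three-term recurrence
   x p_n = a_n p_{n+1} + b_n p_n + c_n p_{n-1}, p_{-1} = 0, p_0 = 1. *)
Fixpoint ppair (R : realType) (a b c : nat -> R) (x : R) (n : nat) : R * R :=
  match n with
  | 0%N => (0, 1)
  | n'.+1 => let pr := ppair a b c x n' in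
             (pr.2, ((x - b n') * pr.2 - c n' * pr.1) / a n')
  end.

Definition pval (R : realType) (a b c : nat -> R) (n : nat) (x : R) : R :=
  (ppair a b c x n).2.

Definition Mval (R : realType) (a b c : nat -> R) (t : R) (n : nat) (y : R) : R :=
  (\prod_(j < n) a j) / (Num.sqrt t) ^+ n * pval a b c n (y * Num.sqrt t).

(* Multiplying p_n by the product a_0 ... a_{n-1} makes the three-term recurrence monic,
   and the rescaling y = x / sqrt t turns it into
   y M_n = M_{n+1} + (b_n / sqrt t) M_n + (a_{n-1} c_n / t) M_{n-1}.
   Only (E1), (E2) and the initial values matter for the coefficients: by induction they
   give alpha_n = sigma lambda_n beta_n and phi_{n+1} = tau lambda_n epsilon_{n+1}, so
   a_{n-1}(t) c_n(t) / t = chi_n (1 + sigma lambda_{n-1} t) (t + tau lambda_{n-1}) / t. *)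
From HB Require Import structures.
From mathcomp Require Import all_boot all_order all_algebra.
From mathcomp Require Import reals.
From mathcomp Require Import ring.
Set Implicit Arguments.
Unset Strict Implicit.
Unset Printing Implicit Defensive.

Import Order.TTheory GRing.Theory Num.Theory.
Local Open Scope ring_scope.

Section MonicRescaling.

Variables (R : realType) (a b c : nat -> R) (t : R).
Hypothesis t_gt0 : 0 < t.
Hypothesis a_neq0 : forall n, a n != 0.

Lemma pval1 x : pval a b c 1 x = (x - b 0%N) / a 0%N.
Proof. by rewrite /pval /= mulr1 mulr0 subr0. Qed.

Lemma pvalSS n x : pval a b c n.+2 x =
  ((x - b n.+1) * pval a b c n.+1 x - c n.+1 * pval a b c n x) / a n.+1.
Proof. by []. Qed.

Let s := Num.sqrt t.

Let s_neq0 : s != 0. Proof. by rewrite gt_eqF // sqrtr_gt0. Qed.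

Let sqr_s : s ^+ 2 = t. Proof. by rewrite sqr_sqrtr // ltW. Qed.

Lemma Mval0 y : Mval a b c t 0 y = 1.
Proof. by rewrite /Mval big_ord0 expr0 divr1 mul1r. Qed.

Lemma Mval_rec0 y :
  y * Mval a b c t 0 y = Mval a b c t 1 y + b 0%N / s * Mval a b c t 0 y.
Proof.
rewrite Mval0 /Mval pval1 big_ord1 -/s.
by field; rewrite s_neq0 a_neq0.
Qed.

Lemma Mval_recS n y :
  y * Mval a b c t n.+1 y = Mval a b c t n.+2 y + b n.+1 / s * Mval a b c t n.+1 y
    + a n * c n.+1 / t * Mval a b c t n y.
Proof.
rewrite /Mval pvalSS !big_ord_recr /= -/s -sqr_s !exprS; field.
by rewrite expf_neq0 // s_neq0 a_neq0.
Qed.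

End MonicRescaling.

Section CoefficientFactorisation.

Variables (R : realType) (sigma tau q : R).
Hypothesis lam_den_neq0 : forall n, 1 - sigma * tau * lam sigma tau q n != 0.

Lemma alpha_eq_lam_beta (al be : nat -> R) :
  (forall n, tau * al n * al n.+1 + q * al n * be n.+1 + sigma * be n * be n.+1
             = al n.+1 * be n) ->
  al 0%N = 0 -> be 0%N = 1 -> (forall n, (al n, be n) != (0, 0)) ->
  forall n, al n = sigma * lam sigma tau q n * be n /\ be n != 0.
Proof.
move=> E1 al0 be0 ab_neq0.
elim=> [|n [al_n be_n_neq0]]; first by rewrite al0 be0 /= mulr0 mul0r oner_eq0.
have al_Sn : al n.+1 = sigma * lam sigma tau q n.+1 * be n.+1.
  have e := E1 n; rewrite al_n in e.
  have den_neq0 := lam_den_neq0 n.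
  apply: (mulIf (mulf_neq0 be_n_neq0 den_neq0)) => /=.
  set l := lam sigma tau q n in e den_neq0 *.
  transitivity (al n.+1 * be n - sigma * tau * l * (be n * al n.+1)); first by ring.
  by rewrite -e; field.
split=> //; apply/eqP => be_Sn.
by move: (ab_neq0 n.+1); rewrite al_Sn be_Sn mulr0 eqxx.
Qed.

Lemma phi_eq_lam_eps (ep ph : nat -> R) :
  (forall n, (2 <= n)%N ->
     tau * ep n.-1 * ep n + q * ep n * ph n.-1 + sigma * ph n * ph n.-1
     = ep n.-1 * ph n) ->
  ph 1%N = 0 -> ep 1%N = 1 -> (forall n, (1 <= n)%N -> (ep n, ph n) != (0, 0)) ->
  forall n, ph n.+1 = tau * lam sigma tau q n * ep n.+1 /\ ep n.+1 != 0.
Proof.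
move=> E2 ph1 ep1 ef_neq0.
elim=> [|n [ph_n ep_n_neq0]]; first by rewrite ph1 ep1 /= mulr0 mul0r oner_eq0.
have ph_Sn : ph n.+2 = tau * lam sigma tau q n.+1 * ep n.+2.
  have e := E2 n.+2 isT; rewrite /= ph_n in e.
  have den_neq0 := lam_den_neq0 n.
  apply: (mulIf (mulf_neq0 ep_n_neq0 den_neq0)) => /=.
  set l := lam sigma tau q n in e den_neq0 *.
  transitivity (ep n.+1 * ph n.+2 - sigma * ph n.+2 * (tau * l * ep n.+1)).
    by ring.
  by rewrite -e; field.
split=> //; apply/eqP => ep_Sn.
by move: (ef_neq0 n.+2 isT); rewrite ph_Sn ep_Sn mulr0 eqxx.
Qed.

End CoefficientFactorisation.

Theorem mainTheorem3 (R : realType) (sigma tau theta eta q : R)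
  (al be ga de ep ph : nat -> R) (t : R)
  (hq : -1 < q <= 1)
  (hlam_def : forall n : nat, 1 - sigma * tau * lam sigma tau q n != 0)
  (hlam_nz : forall n : nat, (1 <= n)%N -> lam sigma tau q n != 0)
  (E1 : forall n : nat,
     tau * al n * al n.+1 + q * al n * be n.+1 + sigma * be n * be n.+1
     = al n.+1 * be n)
  (E2 : forall n : nat, (2 <= n)%N ->
     tau * ep n.-1 * ep n + q * ep n * ph n.-1 + sigma * ph n * ph n.-1
     = ep n.-1 * ph n)
  (E3 : forall n : nat,
     theta * al n + eta * be n + tau * al n * (ga n + ga n.+1)
     + sigma * be n * (de n + de n.+1) + q * (al n * de n.+1 + be n * ga n)
     = be n * ga n.+1 + al n * de n)
  (E4 : forall n : nat, (1 <= n)%N ->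
     theta * ep n + eta * ph n + tau * ep n * (ga n + ga n.-1)
     + sigma * ph n * (de n.-1 + de n) + q * (ph n * ga n + de n.-1 * ep n)
     = ep n * de n + ph n * ga n.-1)
  (E5 : forall n : nat, (1 <= n)%N ->
     1 + theta * ga n + eta * de n + tau * ga n ^+ 2 + sigma * de n ^+ 2
     + tau * (al n.-1 * ep n + al n * ep n.+1)
     + sigma * (ph n * be n.-1 + be n * ph n.+1)
     + q * (ga n * de n + be n.-1 * ep n + al n * ph n.+1)
     = ga n * de n + be n * ep n.+1 + ph n * al n.-1)
  (h_al0 : al 0%N = 0) (h_ga0 : ga 0%N = 0) (h_de0 : de 0%N = 0)
  (h_ph1 : ph 1%N = 0) (h_be0 : be 0%N = 1) (h_ep1 : ep 1%N = 1)
  (h_ab : forall n : nat, (al n, be n) != (0, 0))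
  (h_ef : forall n : nat, (1 <= n)%N -> (ep n, ph n) != (0, 0))
  (ht : 0 < t)
  (ha : forall n : nat, al n * t + be n != 0) :
  let a := fun n => al n * t + be n in
  let b := fun n => ga n * t + de n in
  let c := fun n => ep n * t + ph n in
  let chi := fun n => be n.-1 * ep n in
  let M := Mval a b c t in
  (forall y : R, M 0%N y = 1) /\
  (forall y : R,
     y * M 0%N y = M 1%N y + (ga 0%N * Num.sqrt t + de 0%N / Num.sqrt t) * M 0%N y) /\
  (forall (n : nat) (y : R), (1 <= n)%N ->
     y * M n y = M n.+1 y + (ga n * Num.sqrt t + de n / Num.sqrt t) * M n y
       + chi n * (1 + sigma * lam sigma tau q n.-1 * t + tau * lam sigma tau q n.-1 / t
                  + sigma * tau * lam sigma tau q n.-1 ^+ 2) * M n.-1 y).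
Proof.
move=> a b c chi M.
have s_neq0 : Num.sqrt t != 0 by rewrite gt_eqF // sqrtr_gt0.
have sqr_s : Num.sqrt t ^+ 2 = t by rewrite sqr_sqrtr // ltW.
have t_neq0 : t != 0 by rewrite gt_eqF.
have b_div_s n : b n / Num.sqrt t = ga n * Num.sqrt t + de n / Num.sqrt t.
  by rewrite /b -{1}sqr_s; field.
split; first exact: Mval0.
split; first by move=> y; rewrite /M Mval_rec0 // b_div_s.
case=> [|m] // y _; rewrite /M Mval_recS // b_div_s.
have [al_m _] := alpha_eq_lam_beta hlam_def E1 h_al0 h_be0 h_ab m.
have [ph_Sm _] := phi_eq_lam_eps hlam_def E2 h_ph1 h_ep1 h_ef m.
congr (_ + _ * _); rewrite /a /c /chi al_m ph_Sm /=.
by field.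
Qed.
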